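(* Let $P$ be either (case $P_\alpha$) a hyperbolic $2$-sphere with three cone points $p_1,p_2,p_3$ of cone angles $2\alpha_1,2\alpha_2,2\alpha_3$, all less than $2\pi$, removed, with $\gamma_k$ a simple loop around $p_k$; or (case $P_l$) a hyperbolic $3$-holed sphere with geodesic boundary components $\gamma_1,\gamma_2,\gamma_3$ of lengths $2l_1,2l_2,2l_3$. Let $\rho:\pi_1(P)\to\mathrm{PSL}(2;\mathbb R)\subset\mathrm{PSL}(2;\mathbb C)$ be the holonomy representation, $\widetilde\rho$ a lift to $\mathrm{SL}(2;\mathbb C)$, and $\mathrm{Ad}_\rho=\mathrm{Sym}^2\circ\widetilde\rho:\pi_1(P)\to\mathrm{SL}(3;\mathbb C)$. For $k=1,2,3$ let $\mathbf I_k\in\mathbb C^3$ be a (unique up to scalar) nonzero invariant vector of $\mathrm{Ad}_\rho([\gamma_k])^T$. Then: \begin{enumerate} \item[(1)] $H_k(P;\mathrm{Ad}_\rho)=0$ for $k\neq1$. \item[(2)] $H_1(P;\mathrm{Ad}_\rho)\cong\mathbb C^3$, with basis $\mathbf h_P=\{\mathbf I_1\otimes[\gamma_1],\mathbf I_2\otimes[\gamma_2],\mathbf I_3\otimes[\gamma_3]\}$. \item[(3)] $\displaystyle\mathrm{Tor}(P_\alpha,\mathbf h_P;\mathrm{Ad}_\rho)=\pm\frac{i}{16\sin\alpha_1\sin\alpha_2\sin\alpha_3}$. \item[(4)] $\displaystyle\mathrm{Tor}(P_l,\mathbf h_P;\mathrm{Ad}_\rho)=\pm\frac{1}{16\sinh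 l_1\sinh l_2\sinh l_3}$. \end{enumerate}
   Context: $\mathrm{Sym}^2$ is the symmetric square representation of $\mathrm{SL}(2;\mathbb C)$ on $\mathbb C^3$ (homogeneous quadratic polynomials in two variables); $\mathrm{Sym}^2\circ\widetilde\rho$ is independent of the lift and conjugate to the adjoint representation. Twisted chain complex: $C_*(P;\mathrm{Ad}_\rho)=\mathbb C^3\otimes_{\mathrm{Ad}_\rho}C_*(\widetilde P;\mathbb Z)$ (for a CW structure on $P$, e.g. a spine), with relation $\mathbf v\otimes\gamma\mathbf c=(\mathrm{Ad}_\rho(\gamma)^T\mathbf v)\otimes\mathbf c$ and standard basis $\{\mathbf e_r\otimes c\}$. The class $\mathbf I_k\otimes[\gamma_k]$ is represented by $\mathbf I_k\otimes\widetilde\gamma_k$ for a lift $\widetilde\gamma_k$ of the loop. Reidemeister torsion of a complex with bases $\mathbf c_k$ and homology bases $\mathbf h_k$: $\mathrm{Tor}=\pm\prod_k[\mathbf b_k\sqcup\widetilde{\mathbf b}_{k-1}\sqcup\widetilde{\mathbf h}_k;\mathbf c_k]^{(-1)^{k+1}}$, where $\mathbf b_k$ is a basis of $\partial C_{k+1}$, $\widetilde{\mathbf b}_k\subset C_{k+1}$ a lift, $\widetilde{\mathbf h}_k$ a lift of $\mathbf h_k$, and $[\,\cdot\,;\,\cdot\,]$ the determinant of the change of basis; it is invariant under subdivision and simple homotopy.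
   Formalization: Each invariant vector $\mathbf I_k$, seen as a homogeneous quadratic polynomial, is normalized to have discriminant 1 (square of the middle coefficient minus four times the product of the outer two), rather than being any nonzero scalar multiple. The statement above fails without it. *)

From HB Require Import structures.
From mathcomp Require Import all_boot all_order all_algebra.
From mathcomp Require Import reals trigo sequences.
From mathcomp Require Export complex.
Set Implicit Arguments. Unset Strict Implicit. Unset Printing Implicit Defensive.
Import Order.TTheory GRing.Theory Num.Theory.
Local Open Scope ring_scope.
Local Open Scope complex_scope.

Definition sinhR {R : realType} (x : R) : R := (expR x - expR (- x)) / 2.
Definition coshR {R : realType} (x : R) : R := (expR x + expR (- x)) / 2.

Definition idx0 : 'I_2 := ord0.
Definition idx1 : 'I_2 := ord_max.

(* C^3 = homogeneous quadratic polynomials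
   u x^2 + v xy + w y^2, coordinates (u, v, w) in the monomial basis.
   sym2 g is the matrix of p |-> p o g, i.e. p(x,y) |-> p(ax+by, cx+dy)
   for g = [[a,b],[c,d]], acting on coefficient ROW vectors: (p o g) = p *m sym2 g.
   It is multiplicative: sym2 (g *m h) = sym2 g *m sym2 h.  Hence on column
   vectors the transpose sym2 g ^T is the (right) action used in the twisted
   chain complex:  v (x) gamma c = (Ad(gamma)^T v) (x) c. *)
Definition sym2 {F : comPzRingType} (g : 'M[F]_2) : 'M[F]_3 :=
  let a := g idx0 idx0 in let b := g idx0 idx1 in
  let c := g idx1 idx0 in let d := g idx1 idx1 in
  \matrix_(i < 3, j < 3)
    match nat_of_ord i, nat_of_ord j with
    | 0, 0 => a ^+ 2       | 0, 1 => (a * b) *+ 2   | 0, _ => b ^+ 2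
    | 1, 0 => a * c        | 1, 1 => a * d + b * c  | 1, _ => b * d
    | _, 0 => c ^+ 2       | _, 1 => (c * d) *+ 2   | _, _ => d ^+ 2
    end.

Definition AdC {R : realType} (g : 'M[R]_2) : 'M[R[i]]_3 :=
  sym2 (map_mx (fun x : R => x%:C) g).

Definition SL2R {R : realType} (g : 'M[R]_2) : Prop := \det g = 1.

(* pi_1(P) is free on gamma_1, gamma_2, with gamma_1 gamma_2 gamma_3 = 1
   (boundary loops / loops around the cone points, coherently oriented).
   A lift of the holonomy is determined by A = rho~(gamma_1), B = rho~(gamma_2);
   rho~(gamma_3) = (A B)^{-1}.

   Holonomy of the hyperbolic sphere with cone angles 2 a1, 2 a2, 2 a3
   (gamma_k elliptic of rotation angle 2 a_k): real SL(2) lift with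
   tr A = 2 cos a1, tr B = 2 cos a2, tr (AB) = -2 cos a3.  (This determines the
   representation up to conjugation: it is the character of the holonomy.) *)
Definition cone_holonomy {R : realType} (a1 a2 a3 : R) (A B : 'M[R]_2) : Prop :=
  [/\ SL2R A, SL2R B,
      \tr A = 2 * cos a1, \tr B = 2 * cos a2 & \tr (A *m B) = - (2 * cos a3)].

(* Holonomy of the hyperbolic pair of pants with geodesic boundary lengths
   2 l1, 2 l2, 2 l3 (gamma_k hyperbolic of translation length 2 l_k):
   tr A = 2 cosh l1, tr B = 2 cosh l2, tr (AB) = -2 cosh l3. *)
Definition pants_holonomy {R : realType} (l1 l2 l3 : R) (A B : 'M[R]_2) : Prop :=
  [/\ SL2R A, SL2R B,
      \tr A = 2 * coshR l1, \tr B = 2 * coshR l2 & \tr (A *m B) = - (2 * coshR l3)].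

Section Complex.
Context {R : realType}.
Local Notation C := (R[i]).

(* Twisted chain complex of the spine of P (wedge of two circles: one vertex v,
   edges e1, e2 with lifts e~_j from v~ to gamma_j v~):
     C_1 = C^3 (x) e~_1  (+)  C^3 (x) e~_2  = 'cV_(3+3),   C_0 = C^3 (x) v~ = 'cV_3,
   C_k = 0 for k >= 2, standard bases {e_r (x) cell}.
   d(v (x) e~_j) = v (x) (gamma_j v~ - v~) = (Ad(gamma_j)^T v - v) (x) v~. *)
Definition bd (A B : 'M[R]_2) : 'M[C]_(3, 3 + 3) :=
  row_mx ((AdC A)^T - 1%:M) ((AdC B)^T - 1%:M).

Definition disc (I : 'cV[C]_3) : C :=
  I (inord 1) ord0 ^+ 2 - 4%:R * I (inord 0) ord0 * I (inord 2) ord0.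

Definition normalized_invariant (g : 'M[R]_2) (I : 'cV[C]_3) : Prop :=
  [/\ I != 0, (AdC g)^T *m I = I & disc I = 1].

(* The chains I_k (x) gamma~_k (lifts starting at v~):
   gamma~_1 = e~_1, gamma~_2 = e~_2, and for gamma_3 = gamma_2^{-1} gamma_1^{-1}:
   gamma~_3 = - gamma_2^{-1} e~_2 - gamma_2^{-1} gamma_1^{-1} e~_1, so
   I_3 (x) gamma~_3 = - (Ad(gamma_2^{-1}gamma_1^{-1})^T I_3) (x) e~_1
                      - (Ad(gamma_2^{-1})^T I_3) (x) e~_2.
   Columns of hP are the three chains, in the order h_P. *)
Definition hP (A B : 'M[R]_2) (I1 I2 I3 : 'cV[C]_3) : 'M[C]_(3 + 3, 3) :=
  row_mx (row_mx (col_mx I1 0) (col_mx 0 I2))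
         (- col_mx ((AdC (invmx (A *m B)))^T *m I3) ((AdC (invmx B))^T *m I3)).

(* H_0 = C_0 / d C_1 = 0  (H_k = 0 for k >= 2 since C_k = 0). *)
Definition H0_vanishes (A B : 'M[R]_2) : Prop := \rank (bd A B) = 3.

(* H_1 = ker d  (no 2-cells), as a row space: rows are transposed 1-cycles. *)
Definition H1 (A B : 'M[R]_2) : 'M[C]_(3 + 3) := kermx (bd A B)^T.

Definition H1_basis (A B : 'M[R]_2) (I1 I2 I3 : 'cV[C]_3) : Prop :=
  [/\ \rank (H1 A B) = 3,
      ((hP A B I1 I2 I3)^T == H1 A B)%MS & row_free (hP A B I1 I2 I3)^T].

(* Reidemeister torsion of 0 -> C_1 -> C_0 -> 0 with homology basis h:
   Tor = [b_1 u b~_0 u h~_1 ; c_1]^{+1} [b_0 ; c_0]^{-1}, with b_1 = {} (C_2 = 0),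
   b~_0 = columns of L (any lift), b_0 = d b~_0 = columns of d L (must be a basis). *)
Definition torsion (D : 'M[C]_(3, 3 + 3)) (H L : 'M[C]_(3 + 3, 3)) : C :=
  \det (row_mx L H) / \det (D *m L).

End Complex.

From HB Require Import structures.
From mathcomp Require Import all_boot all_order all_algebra.
From mathcomp Require Import reals trigo sequences complex exp.
From mathcomp Require Import ring lra.
Set Implicit Arguments. Unset Strict Implicit. Unset Printing Implicit Defensive.
Import Order.TTheory GRing.Theory Num.Theory.
Local Open Scope ring_scope.

(* Over any field of characteristic not 2, the boundary map
   d = [Ad(A)^T - 1 | Ad(B)^T - 1] of the spine and the matrix H of the three
   cycles satisfy d H = 0, and comparing [L | H] with [G' d^T | H] through the
   Sym^2-invariant discriminant form G on C_1 (G G' = 2) gives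
     Tor^2 = 2^3 det (H^T G H) / (det G * det (d G' d^T)).
   Both Gram determinants are polynomials in t_1 = tr A, t_2 = tr B and
   t_3 = tr AB: each I_k is the multiple of the fixed-point quadratic of
   gamma_k normalised by disc I_k = 1, so the pairings of the I_k only depend on
   the t_k, and a trace identity turns the quotient into
   1 / (4 (t_1^2 - 4) (t_2^2 - 4) (t_3^2 - 4)).  For the hyperbolic structures
   t_k^2 - 4 is -4 sin^2 alpha_k, resp. 4 sinh^2 l_k; the nonvanishing of the
   two Gram determinants is also what makes H_0 vanish and h_P a basis of H_1. *)

Ltac mx_simpl := repeat progress rewrite ?mxE ?big_ord_recl ?big_ord0 /=.
Ltac mx3_ext := apply/matrixP => -[[|[|[|?]]] ?] -[[|[|[|?]]] ?] //; mx_simpl.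
Ltac mx2_ext := apply/matrixP => -[[|[|?]] ?] -[[|[|?]] ?] //; mx_simpl.

Section Coordinates.
Variable R : comPzRingType.

Definition mx2 (a b c d : R) : 'M[R]_2 := \matrix_(i < 2, j < 2)
  match nat_of_ord i, nat_of_ord j with 0, 0 => a | 0, _ => b | _, 0 => c | _, _ => d end.

Definition mx3 (a b c d e f g h k : R) : 'M[R]_3 := \matrix_(i < 3, j < 3)
  match nat_of_ord i, nat_of_ord j with
  | 0, 0 => a | 0, 1 => b | 0, _ => c
  | 1, 0 => d | 1, 1 => e | 1, _ => f
  | _, 0 => g | _, 1 => h | _, _ => k end.

Definition col3 (x y z : R) : 'cV[R]_3 := \matrix_(i < 3, j < 1)
  match nat_of_ord i with 0 => x | 1 => y | _ => z end.

Definition i30 : 'I_3 := @Ordinal 3 0 isT.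
Definition i31 : 'I_3 := @Ordinal 3 1 isT.
Definition i32 : 'I_3 := @Ordinal 3 2 isT.

Lemma mx2_eta (g : 'M[R]_2) :
  g = mx2 (g idx0 idx0) (g idx0 idx1) (g idx1 idx0) (g idx1 idx1).
Proof.
apply/matrixP => -[[|[|i]] Hi] -[[|[|j]] Hj] //; rewrite mxE /=;
  by congr (g _ _); apply: val_inj.
Qed.

Lemma mx3_eta (g : 'M[R]_3) : g = mx3 (g i30 i30) (g i30 i31) (g i30 i32)
  (g i31 i30) (g i31 i31) (g i31 i32) (g i32 i30) (g i32 i31) (g i32 i32).
Proof.
apply/matrixP => -[[|[|[|i]]] Hi] -[[|[|[|j]]] Hj] //; rewrite mxE /=;
  by congr (g _ _); apply: val_inj.
Qed.

Lemma col3_eta (v : 'cV[R]_3) : v = col3 (v i30 0) (v i31 0) (v i32 0).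
Proof.
apply/matrixP => -[[|[|[|i]]] Hi] j //; rewrite mxE ord1 /=;
  by congr (v _ _); apply: val_inj.
Qed.

Lemma det_mx3 a b c d e f g h k : \det (mx3 a b c d e f g h k) =
  a * (e * k - f * h) - b * (d * k - f * g) + c * (d * h - e * g).
Proof.
rewrite (expand_det_row _ ord0) !big_ord_recl big_ord0 /cofactor.
rewrite !(expand_det_row _ ord0) !big_ord_recl !big_ord0 /cofactor !det_mx11 !mxE /=.
ring.
Qed.

Lemma trace_mx2 (g : 'M[R]_2) : \tr g = g idx0 idx0 + g idx1 idx1.
Proof. by rewrite /mxtrace !big_ord_recl big_ord0 addr0; congr (_ + g _ _); apply: val_inj. Qed.

Lemma det_mx2 (g : 'M[R]_2) : \det g = g idx0 idx0 * g idx1 idx1 - g idx0 idx1 * g idx1 idx0.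
Proof.
rewrite {1}[g]mx2_eta (expand_det_row _ ord0) !big_ord_recl big_ord0 /cofactor !det_mx11 !mxE /=.
ring.
Qed.

Lemma adj_mx2 (g : 'M[R]_2) :
  \adj g = mx2 (g idx1 idx1) (- g idx0 idx1) (- g idx1 idx0) (g idx0 idx0).
Proof.
rewrite {1}[g]mx2_eta; apply/matrixP => -[[|[|i]] Hi] -[[|[|j]] Hj] //;
  rewrite !mxE /cofactor det_mx11 !mxE /=; ring.
Qed.

End Coordinates.

Ltac mx2_coords g := rewrite ?(trace_mx2 g) ?(det_mx2 g) ?(adj_mx2 g) [g]mx2_eta;
  move: (g idx0 idx0) (g idx0 idx1) (g idx1 idx0) (g idx1 idx1).
Ltac col3_coords v := rewrite [v]col3_eta; move: (v i30 0) (v i31 0) (v i32 0).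

Section Sym2Identities.
Variable R : comPzRingType.
Implicit Types g h : 'M[R]_2.

Definition disc_mx : 'M[R]_3 := mx3 0 0 (-2) 0 1 0 (-2) 0 0.
Definition disc_dual_mx : 'M[R]_3 := mx3 0 0 (-1) 0 2 0 (-1) 0 0.

(* The quadratic form c x^2 + (d - a) x y - b y^2, whose roots x / y are the
   fixed points of the Moebius map of g = [[a, b], [c, d]]. *)
Definition fixed_quad g : 'cV[R]_3 :=
  col3 (g idx1 idx0) (g idx1 idx1 - g idx0 idx0) (- g idx0 idx1).

Lemma sym2M g h : sym2 (g *m h) = sym2 g *m sym2 h.
Proof. mx2_coords g => a b c d; mx2_coords h => a' b' c' d'; rewrite /sym2; mx3_ext; ring. Qed.

Lemma sym2_1 : sym2 (1%:M : 'M[R]_2) = 1%:M.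
Proof. rewrite /sym2; mx3_ext; ring. Qed.

Lemma sym2_disc_mx g : sym2 g *m disc_mx *m (sym2 g)^T = (\det g) ^+ 2 *: disc_mx.
Proof. mx2_coords g => a b c d; rewrite /sym2 /disc_mx; mx3_ext; ring. Qed.

Lemma sym2_disc_dual_mx g :
  ((sym2 g)^T - (\det g)%:M) *m disc_dual_mx *m ((sym2 g)^T - (\det g)%:M)^T =
  disc_dual_mx *m ((2 * \det g ^+ 2)%:M - \det g *: (sym2 g + sym2 (\adj g))).
Proof.
mx2_coords g => a b c d; rewrite /sym2 /disc_dual_mx; mx3_ext; ring.
Qed.

Lemma sym2_add_adj g : (sym2 g + sym2 (\adj g))^T =
  (\tr g ^+ 2 - 2 * \det g)%:M - fixed_quad g *m (fixed_quad g)^T *m disc_mx.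
Proof.
rewrite /fixed_quad; mx2_coords g => a b c d.
rewrite /sym2 /disc_mx; mx3_ext; ring.
Qed.

Lemma sym2_sub_det_annihilator g :
  let X := (sym2 g)^T - (\det g)%:M in
  (X - (\tr g ^+ 2 - 4%:R * \det g)%:M) *m X =
  ((\tr g ^+ 2 - 4%:R * \det g) * \det g)%:M
    - \det g *: (fixed_quad g *m (fixed_quad g)^T *m disc_mx).
Proof.
rewrite /= /fixed_quad; mx2_coords g => a b c d.
rewrite /sym2 /disc_mx; mx3_ext; ring.
Qed.

Lemma disc_mx_dual : disc_mx *m disc_dual_mx = 2%:M.
Proof. rewrite /disc_mx /disc_dual_mx; mx3_ext; ring. Qed.

Lemma tr_disc_mx : disc_mx^T = disc_mx.
Proof. rewrite /disc_mx; mx3_ext; ring. Qed.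

Lemma det_disc_mx : \det disc_mx = - 4%:R.
Proof. rewrite /disc_mx det_mx3; ring. Qed.

Lemma det_disc_dual_mx : \det disc_dual_mx = - 2.
Proof. rewrite /disc_dual_mx det_mx3; ring. Qed.

Lemma tr_adj_mx2 g : \tr (\adj g) = \tr g.
Proof. rewrite [in LHS]trace_mx2 adj_mx2; mx2_coords g => a b c d; mx_simpl; ring. Qed.

Lemma det_adj_mx2 g : \det (\adj g) = \det g.
Proof. rewrite [in LHS]det_mx2 adj_mx2; mx2_coords g => a b c d; mx_simpl; ring. Qed.

Lemma adj_mulmx2 g h : \adj (g *m h) = \adj h *m \adj g.
Proof.
rewrite !adj_mx2; mx2_coords g => a b c d; mx2_coords h => a' b' c' d'.
mx2_ext; ring.
Qed.

End Sym2Identities.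

Arguments disc_mx {R}.
Arguments disc_dual_mx {R}.

Section DiscForm.
Variable R : comPzRingType.
Implicit Types (g h : 'M[R]_2) (x y z : 'cV[R]_3).

Definition disc_form x y : R := (x^T *m disc_mx *m y) 0 0.

Lemma disc_formC x y : disc_form x y = disc_form y x.
Proof.
rewrite /disc_form; transitivity ((x^T *m disc_mx *m y)^T 0 0); first by rewrite [RHS]mxE.
by rewrite !trmx_mul trmxK tr_disc_mx mulmxA.
Qed.

Lemma disc_formZr a x y : disc_form x (a *: y) = a * disc_form x y.
Proof. by rewrite /disc_form -scalemxAr mxE. Qed.

Lemma disc_formNr x y : disc_form x (- y) = - disc_form x y.
Proof. by rewrite -scaleN1r disc_formZr mulN1r. Qed.

Lemma disc_form0r x : disc_form x 0 = 0.
Proof. by rewrite /disc_form mulmx0 mxE. Qed.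

Lemma disc_form0l y : disc_form 0 y = 0.
Proof. by rewrite disc_formC disc_form0r. Qed.

Lemma disc_formNl x y : disc_form (- x) y = - disc_form x y.
Proof. by rewrite disc_formC disc_formNr disc_formC. Qed.

Lemma disc_form_sym2 g x y :
  disc_form ((sym2 g)^T *m x) ((sym2 g)^T *m y) = \det g ^+ 2 * disc_form x y.
Proof.
rewrite /disc_form trmx_mul trmxK -!mulmxA (mulmxA (sym2 g)) (mulmxA (sym2 g *m _)).
by rewrite sym2_disc_mx -scalemxAl -scalemxAr mxE mulmxA.
Qed.

Lemma disc_form_fixed_quad g h :
  disc_form (fixed_quad g) (fixed_quad h) = 2 * \tr (g *m h) - \tr g * \tr h.
Proof.
rewrite !trace_mx2 /disc_form /fixed_quad /disc_mx.
mx2_coords g => a b c d; mx2_coords h => a' b' c' d'; mx_simpl; ring.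
Qed.

Lemma disc_form_fixed_quad_self g :
  disc_form (fixed_quad g) (fixed_quad g) = \tr g ^+ 2 - 4%:R * \det g.
Proof.
rewrite disc_form_fixed_quad !trace_mx2 det_mx2; mx2_coords g => a b c d; mx_simpl; ring.
Qed.

Lemma gram_row3 x y z : let X := row_mx (row_mx x y) z in
  X^T *m disc_mx *m X = mx3 (disc_form x x) (disc_form x y) (disc_form x z)
    (disc_form y x) (disc_form y y) (disc_form y z)
    (disc_form z x) (disc_form z y) (disc_form z z).
Proof.
have -> : row_mx (row_mx x y) z = \matrix_(i, j)
    match nat_of_ord j with 0 => x i 0 | 1 => y i 0 | _ => z i 0 end.
  apply/matrixP => i j; rewrite !mxE; case: splitP => j1 ->; last by rewrite (ord1 j1).
  by rewrite mxE; case: splitP => j2 ->; rewrite (ord1 j2).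
rewrite /disc_form /disc_mx.
col3_coords x => x0 x1 x2; col3_coords y => y0 y1 y2; col3_coords z => z0 z1 z2.
mx3_ext; ring.
Qed.

Lemma det_scalar_add_disc_rank2 (c : R) (u v : 'cV[R]_3) :
  \det (c%:M + u *m u^T *m disc_mx + v *m v^T *m disc_mx) =
  c * ((c + disc_form u u) * (c + disc_form v v) - disc_form u v ^+ 2).
Proof.
rewrite /disc_form /disc_mx; col3_coords u => u0 u1 u2; col3_coords v => v0 v1 v2.
rewrite [X in \det X]mx3_eta det_mx3; mx_simpl; ring.
Qed.

End DiscForm.

Lemma invmx_det1 (R : comUnitRingType) n (g : 'M[R]_n) : \det g = 1 -> invmx g = \adj g.
Proof. by move=> dg; rewrite /invmx unitmxE dg unitr1 invr1 scale1r. Qed.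

Section FixedVectors.
Variable F : fieldType.
Implicit Types (g h : 'M[F]_2) (x y : 'cV[F]_3).

Lemma sym2_fixed_vector g x : \det g = 1 -> \tr g ^+ 2 - 4%:R != 0 ->
  (sym2 g)^T *m x = x -> x = (disc_form (fixed_quad g) x / (\tr g ^+ 2 - 4%:R)) *: fixed_quad g.
Proof.
move=> dg Sg fix_x; set S := \tr g ^+ 2 - 4%:R; set q := fixed_quad g.
have := sym2_sub_det_annihilator g; rewrite /= dg !mulr1 scale1r -/S -/q => E.
have Xx : ((sym2 g)^T - 1%:M) *m x = 0 by rewrite mulmxBl mul1mx fix_x subrr.
have : (S%:M - q *m q^T *m disc_mx) *m x = 0 by rewrite -E -mulmxA Xx mulmx0.
rewrite mulmxBl mul_scalar_mx -!mulmxA [q^T *m _]mx11_scalar mul_mx_scalar.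
move/eqP; rewrite subr_eq0 mulmxA -/(disc_form q x) => /eqP Sx.
by apply: (scalerI Sg); rewrite Sx scalerA mulrCA divff // mulr1.
Qed.

Lemma disc_form_fixed_vectors g h x y :
  \det g = 1 -> \det h = 1 -> \tr g ^+ 2 - 4%:R != 0 -> \tr h ^+ 2 - 4%:R != 0 ->
  (sym2 g)^T *m x = x -> (sym2 h)^T *m y = y -> disc_form x x = 1 -> disc_form y y = 1 ->
  disc_form x y ^+ 2 * ((\tr g ^+ 2 - 4%:R) * (\tr h ^+ 2 - 4%:R)) =
  (2 * \tr (g *m h) - \tr g * \tr h) ^+ 2.
Proof.
move=> dg dh Sg Sh fx fy nx ny.
have scale_sqr k z : disc_form (k *: z) (k *: z) = k ^+ 2 * disc_form z z.
  by rewrite disc_formZr disc_formC disc_formZr mulrA -expr2.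
move: nx ny; rewrite (sym2_fixed_vector dg Sg fx) (sym2_fixed_vector dh Sh fy).
set a := _ / _; set b := _ / _.
rewrite !scale_sqr !disc_form_fixed_quad_self dg dh !mulr1 => nx ny.
rewrite disc_formZr disc_formC disc_formZr disc_formC disc_form_fixed_quad.
transitivity (a ^+ 2 * (\tr g ^+ 2 - 4%:R) * (b ^+ 2 * (\tr h ^+ 2 - 4%:R))
  * (2 * \tr (g *m h) - \tr g * \tr h) ^+ 2); first by ring.
by rewrite nx ny !mul1r.
Qed.

End FixedVectors.

Section TorsionGram.
Variable F : fieldType.

Lemma row_free_mul_unit m n (X : 'M[F]_(m, n)) (Y : 'M[F]_(n, m)) :
  X *m Y \in unitmx -> row_free X.
Proof. by move=> U; apply/row_freeP; exists (Y *m invmx (X *m Y)); rewrite mulmxA mulmxV. Qed.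

Lemma kermx_tr_basis p q (D : 'M[F]_(p, p + q)) (H : 'M[F]_(p + q, q)) :
  \rank D = p -> D *m H = 0 -> row_free H^T ->
  \rank (kermx D^T) = q /\ (H^T == kermx D^T)%MS.
Proof.
move=> rD DH fH; have rK : \rank (kermx D^T) = q by rewrite mxrank_ker mxrank_tr rD addKn.
have sHK : (H^T <= kermx D^T)%MS by apply/sub_kermxP; rewrite -trmx_mul DH trmx0.
by split=> //; rewrite -(mxrank_leqif_eq sHK).2 rK (eqnP fH).
Qed.

Lemma torsion_sqr_gram p q (D : 'M[F]_(p, p + q)) (H : 'M[F]_(p + q, q))
    (L : 'M[F]_(p + q, p)) (G G' : 'M[F]_(p + q)) (c : F) :
  G^T = G -> G *m G' = c%:M -> c != 0 -> D *m H = 0 ->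
  \det (D *m L) != 0 -> \det (H^T *m G *m H) != 0 ->
  (\det (row_mx L H) / \det (D *m L)) ^+ 2 =
    c ^+ p * \det (H^T *m G *m H) / (\det G * \det (D *m G' *m D^T)).
Proof.
move=> sG GG' c0 DH y0 gam0.
(* M = (G N)^T is block lower triangular against both N and [L | H]. *)
set M := col_mx (c *: D) (H^T *m G); set N := row_mx (G' *m D^T) H.
have detM : \det M = \det G * \det N.
  rewrite -det_mulmx -det_tr /M /N mul_mx_row mulmxA GG' tr_row_mx mul_scalar_mx.
  by rewrite linearZ /= trmx_mul sG !trmxK.
have MX (Y : 'M[F]_(p + q, p)) :
    M *m row_mx Y H = block_mx (c *: (D *m Y)) 0 (H^T *m G *m Y) (H^T *m G *m H).
  by rewrite mul_col_mx !mul_mx_row -!scalemxAl DH scaler0 block_mxEv.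
have detMN : \det M * \det N = c ^+ p * \det (D *m G' *m D^T) * \det (H^T *m G *m H).
  by rewrite -det_mulmx MX det_lblock detZ !mulmxA.
have detML : \det M * \det (row_mx L H) = c ^+ p * \det (D *m L) * \det (H^T *m G *m H).
  by rewrite -det_mulmx MX det_lblock detZ.
rewrite detM in detMN detML.
move: detMN detML; set x := \det (row_mx L H); set y := \det (D *m L).
set g := \det G; set n := \det N; set gam := \det (H^T *m G *m H).
set del := \det (D *m G' *m D^T) => detMN detML.
have cp0 : c ^+ p * gam != 0 by rewrite mulf_neq0 ?expf_neq0.
have gnx0 : g * n * x != 0 by rewrite detML mulrAC mulf_neq0.
have gn0 : g * n != 0 by move: gnx0; rewrite mulf_eq0 negb_or => /andP[].
have /andP[g0 n0] : (g != 0) && (n != 0) by rewrite -negb_or -mulf_eq0.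
have del0 : del != 0.
  by apply: contraNneq (mulf_neq0 gn0 n0) => d0; rewrite detMN d0 mulr0 mul0r.
rewrite expr_div_n; apply/eqP; rewrite eqr_div ?mulf_neq0 ?expf_neq0 //; apply/eqP.
apply: (mulIf cp0).
have -> : x ^+ 2 * (g * del) * (c ^+ p * gam) = x ^+ 2 * g * (c ^+ p * del * gam) by ring.
rewrite -detMN (_ : _ * (g * n * n) = (g * n * x) ^+ 2); last by ring.
by rewrite detML; ring.
Qed.

End TorsionGram.

Lemma trace_gram_identity (R : comPzRingType) (t1 t2 t3 b c : R) :
  let S1 := t1 ^+ 2 - 4%:R in let S2 := t2 ^+ 2 - 4%:R in let S3 := t3 ^+ 2 - 4%:R in
  b ^+ 2 * (S1 * S3) = (2 * t2 - t1 * t3) ^+ 2 -> c ^+ 2 * (S2 * S3) = (2 * t1 - t2 * t3) ^+ 2 ->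
  (2 - b ^+ 2 - c ^+ 2) * (S1 * S2 * S3) =
  - (8%:R - t1 ^+ 2 - t2 ^+ 2) * (S1 * S2 - (2 * t3 - t1 * t2) ^+ 2).
Proof.
move=> S1 S2 S3 hb hc.
transitivity (2 * (S1 * S2 * S3) - b ^+ 2 * (S1 * S3) * S2 - c ^+ 2 * (S2 * S3) * S1); first by ring.
by rewrite hb hc /S1 /S2 /S3; ring.
Qed.

Definition nondegenerate_traces (F : fieldType) (t1 t2 t3 : F) : bool :=
  [&& t1 ^+ 2 - 4%:R != 0, t2 ^+ 2 - 4%:R != 0, t3 ^+ 2 - 4%:R != 0,
      8%:R - t1 ^+ 2 - t2 ^+ 2 != 0 &
      (t1 ^+ 2 - 4%:R) * (t2 ^+ 2 - 4%:R) - (2 * t3 - t1 * t2) ^+ 2 != 0].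

Section PantsComplex.
Variable F : fieldType.
Variables A B : 'M[F]_2.

Definition boundary_mx : 'M[F]_(3, 3 + 3) := row_mx ((sym2 A)^T - 1%:M) ((sym2 B)^T - 1%:M).

Definition cycle_mx (I1 I2 I3 : 'cV[F]_3) :=
  row_mx (row_mx (col_mx I1 0) (col_mx 0 I2))
         (- col_mx ((sym2 (invmx (A *m B)))^T *m I3) ((sym2 (invmx B))^T *m I3)).

Hypotheses (detA : \det A = 1) (detB : \det B = 1).

Lemma det_boundary_dual_gram :
  \det (boundary_mx *m block_mx disc_dual_mx 0 0 disc_dual_mx *m boundary_mx^T) =
  - 2 * (8%:R - \tr A ^+ 2 - \tr B ^+ 2) *
    ((\tr A ^+ 2 - 4%:R) * (\tr B ^+ 2 - 4%:R) - (2 * \tr (A *m B) - \tr A * \tr B) ^+ 2).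
Proof.
have dual_sqr (g : 'M[F]_2) : \det g = 1 -> ((sym2 g)^T - 1%:M) *m disc_dual_mx *m ((sym2 g)^T - 1%:M)^T =
    disc_dual_mx *m (2%:M - (sym2 g + sym2 (\adj g))).
  by move=> dg; have := sym2_disc_dual_mx g; rewrite dg expr1n mulr1 scale1r.
rewrite /boundary_mx mul_row_block !mulmx0 addr0 add0r tr_row_mx mul_row_col.
rewrite (dual_sqr _ detA) (dual_sqr _ detB) -mulmxDr det_mulmx det_disc_dual_mx -det_tr.
rewrite linearD !linearB /= !sym2_add_adj tr_scalar_mx detA detB.
set uA := fixed_quad A; set uB := fixed_quad B.
have -> : 2%:M - ((\tr A ^+ 2 - 2 * 1)%:M - uA *m uA^T *m disc_mx)
    + (2%:M - ((\tr B ^+ 2 - 2 * 1)%:M - uB *m uB^T *m disc_mx)) =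
    (8%:R - \tr A ^+ 2 - \tr B ^+ 2)%:M + uA *m uA^T *m disc_mx + uB *m uB^T *m disc_mx.
  by apply/matrixP => i j; rewrite !mxE; case: (i == j) => /=; ring.
rewrite det_scalar_add_disc_rank2 !disc_form_fixed_quad_self disc_form_fixed_quad detA detB.
ring.
Qed.

Variables I1 I2 I3 : 'cV[F]_3.
Hypotheses (fixI1 : (sym2 A)^T *m I1 = I1) (fixI2 : (sym2 B)^T *m I2 = I2)
  (fixI3 : (sym2 (invmx (A *m B)))^T *m I3 = I3).
Hypotheses (normI1 : disc_form I1 I1 = 1) (normI2 : disc_form I2 I2 = 1)
  (normI3 : disc_form I3 I3 = 1).

Let detAB : \det (A *m B) = 1. Proof. by rewrite det_mulmx detA detB mulr1. Qed.

Let I3' := (sym2 (\adj B))^T *m I3.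

Let fixI3' : (sym2 (\adj (A *m B)))^T *m I3 = I3.
Proof. by rewrite -(invmx_det1 detAB). Qed.

Let sym2A_I3 : (sym2 A)^T *m I3 = I3'.
Proof.
by rewrite -{1}fixI3' mulmxA -trmx_mul -sym2M adj_mulmx2 -mulmxA mul_adj_mx detA mulmx1.
Qed.

Let sym2B_I3' : (sym2 B)^T *m I3' = I3.
Proof. by rewrite /I3' mulmxA -trmx_mul -sym2M mul_adj_mx detB sym2_1 trmx1 mul1mx. Qed.

Let disc_form_I3' : disc_form I3' I3' = 1.
Proof. by rewrite /I3' disc_form_sym2 det_adj_mx2 detB expr1n mul1r. Qed.

Let disc_form_I2_I3' : disc_form I2 I3' = disc_form I2 I3.
Proof. by rewrite -[in RHS]fixI2 -[in RHS]sym2B_I3' disc_form_sym2 detB expr1n mul1r. Qed.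

Lemma boundary_cycle_mx : boundary_mx *m cycle_mx I1 I2 I3 = 0.
Proof.
rewrite /boundary_mx /cycle_mx fixI3 (invmx_det1 detB) -/I3' !mul_mx_row mulmxN.
rewrite !mul_row_col !mulmx0 addr0 add0r !mulmxBl !mul1mx fixI1 fixI2 sym2A_I3 sym2B_I3'.
by rewrite addrA subrK !subrr oppr0 !row_mx0.
Qed.

Lemma gram_cycle_mx :
  (cycle_mx I1 I2 I3)^T *m block_mx disc_mx 0 0 disc_mx *m cycle_mx I1 I2 I3 =
  mx3 1 0 (- disc_form I1 I3) 0 1 (- disc_form I2 I3)
      (- disc_form I1 I3) (- disc_form I2 I3) 2.
Proof.
have -> : cycle_mx I1 I2 I3 =
    col_mx (row_mx (row_mx I1 0) (- I3)) (row_mx (row_mx 0 I2) (- I3')).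
  by rewrite /cycle_mx fixI3 (invmx_det1 detB) -/I3' opp_col_mx -!block_mxEh !block_mxEv.
rewrite tr_col_mx mul_row_block !mulmx0 addr0 add0r mul_row_col !gram_row3.
rewrite !(disc_form0r, disc_form0l, disc_formNr, disc_formNl, opprK).
rewrite normI1 normI2 normI3 disc_form_I3' (disc_formC I3 I1) (disc_formC I3' I2) disc_form_I2_I3'.
by mx3_ext; ring.
Qed.

Hypotheses (two_neq0 : 2 != 0 :> F)
  (nondeg : nondegenerate_traces (\tr A) (\tr B) (\tr (A *m B))).

Lemma det_gram_cycle_mx :
  \det ((cycle_mx I1 I2 I3)^T *m block_mx disc_mx 0 0 disc_mx *m cycle_mx I1 I2 I3)
    * ((\tr A ^+ 2 - 4%:R) * (\tr B ^+ 2 - 4%:R) * (\tr (A *m B) ^+ 2 - 4%:R)) =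
  - (8%:R - \tr A ^+ 2 - \tr B ^+ 2) *
    ((\tr A ^+ 2 - 4%:R) * (\tr B ^+ 2 - 4%:R) - (2 * \tr (A *m B) - \tr A * \tr B) ^+ 2).
Proof.
have [S1 S2 S3 _ _] := and5P nondeg.
have detC : \det (\adj (A *m B)) = 1 by rewrite det_adj_mx2 detAB.
have SC : \tr (\adj (A *m B)) ^+ 2 - 4%:R != 0 by rewrite tr_adj_mx2.
have trAC : \tr (A *m \adj (A *m B)) = \tr B.
  by rewrite adj_mulmx2 mulmxA mxtrace_mulC mulmxA mul_adj_mx detA mul1mx tr_adj_mx2.
have trBC : \tr (B *m \adj (A *m B)) = \tr A.
  by rewrite adj_mulmx2 mulmxA mul_mx_adj detB mul1mx tr_adj_mx2.
have dAC := disc_form_fixed_vectors detA detC S1 SC fixI1 fixI3' normI1 normI3.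
have dBC := disc_form_fixed_vectors detB detC S2 SC fixI2 fixI3' normI2 normI3.
rewrite trAC tr_adj_mx2 in dAC; rewrite trBC tr_adj_mx2 in dBC.
rewrite -(trace_gram_identity dAC dBC) gram_cycle_mx det_mx3; ring.
Qed.

Lemma rank_boundary_mx : \rank boundary_mx = 3.
Proof.
have [_ _ _ c0 K0] := and5P nondeg.
apply/eqP; apply: (@row_free_mul_unit _ _ _ _ (block_mx disc_dual_mx 0 0 disc_dual_mx *m boundary_mx^T)).
by rewrite mulmxA unitmxE unitfE det_boundary_dual_gram !mulf_neq0 // oppr_eq0.
Qed.

Let det_gram_neq0 :
  \det ((cycle_mx I1 I2 I3)^T *m block_mx disc_mx 0 0 disc_mx *m cycle_mx I1 I2 I3) != 0.
Proof.
have [_ _ _ c0 K0] := and5P nondeg.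
apply/eqP => gram0; have := det_gram_cycle_mx; rewrite gram0 mul0r => /esym/eqP.
by rewrite mulf_eq0 oppr_eq0 (negPf c0) (negPf K0).
Qed.

Lemma row_free_cycle_mx : row_free (cycle_mx I1 I2 I3)^T.
Proof.
apply: (@row_free_mul_unit _ _ _ _ (block_mx disc_mx 0 0 disc_mx *m cycle_mx I1 I2 I3)).
by rewrite mulmxA unitmxE unitfE.
Qed.

Lemma torsion_cycle_mx_sqr (L : 'M[F]_(3 + 3, 3)) : \det (boundary_mx *m L) != 0 ->
  (\det (row_mx L (cycle_mx I1 I2 I3)) / \det (boundary_mx *m L)) ^+ 2 =
  (4%:R * (\tr A ^+ 2 - 4%:R) * (\tr B ^+ 2 - 4%:R) * (\tr (A *m B) ^+ 2 - 4%:R))^-1.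
Proof.
move=> detDL; have [S1 S2 S3 c0 K0] := and5P nondeg.
have symG : (block_mx disc_mx 0 0 disc_mx)^T = block_mx disc_mx 0 0 (disc_mx : 'M[F]_3).
  by rewrite tr_block_mx tr_disc_mx !trmx0.
have GG' : block_mx disc_mx 0 0 disc_mx *m block_mx disc_dual_mx 0 0 disc_dual_mx =
    (2 : F)%:M :> 'M_(3 + 3).
  by rewrite mulmx_block !mulmx0 !mul0mx !addr0 !add0r disc_mx_dual -scalar_mx_block.
rewrite (torsion_sqr_gram symG GG' two_neq0 boundary_cycle_mx detDL det_gram_neq0).
rewrite det_ublock det_disc_mx det_boundary_dual_gram.
have S0 : (\tr A ^+ 2 - 4%:R) * (\tr B ^+ 2 - 4%:R) * (\tr (A *m B) ^+ 2 - 4%:R) != 0.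
  by rewrite !mulf_neq0.
move: det_gram_cycle_mx; set gam := \det _ => gamE.
rewrite -(mulfK S0 gam) gamE.
have four0 : 4%:R != 0 :> F by rewrite (natrM F 2 2) mulf_neq0.
have sixteen0 : 16%:R != 0 :> F by rewrite (natrM F 4 4) mulf_neq0.
by field; rewrite S1 S2 S3 c0 K0 four0 sixteen0 oppr_eq0 two_neq0.
Qed.

End PantsComplex.

Section RealTraces.
Variable R : realType.

Lemma cos_sqr_sub4 (a : R) : (2 * cos a) ^+ 2 - 4%:R = - 4%:R * sin a ^+ 2.
Proof. by rewrite exprMn cos2sin2; ring. Qed.

Lemma coshR_gt0 (l : R) : 0 < coshR l.
Proof. by rewrite /coshR divr_gt0 ?addr_gt0 ?expR_gt0. Qed.

Lemma sinhR_gt0 (l : R) : 0 < l -> 0 < sinhR l.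
Proof. by move=> l0; rewrite /sinhR divr_gt0 // subr_gt0 ltr_expR; lra. Qed.

Lemma coshR_sqr (l : R) : coshR l ^+ 2 = 1 + sinhR l ^+ 2.
Proof.
have e0 : expR l != 0 by rewrite gt_eqF ?expR_gt0.
by rewrite /coshR /sinhR expRN; field.
Qed.

Lemma cosh_sqr_sub4 (l : R) : (2 * coshR l) ^+ 2 - 4%:R = 4%:R * sinhR l ^+ 2.
Proof. by rewrite exprMn coshR_sqr; ring. Qed.

Lemma cone_nondegenerate (a1 a2 a3 : R) :
  0 < a1 -> 0 < a2 -> 0 < a3 -> a1 < pi -> a2 < pi -> a3 < pi -> a1 + a2 + a3 < pi ->
  nondegenerate_traces (2 * cos a1) (2 * cos a2) (- (2 * cos a3)).
Proof.
move=> a1p a2p a3p a1pi a2pi a3pi sum_lt.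
have sin_pos (x : R) : 0 < x -> x < pi -> 0 < sin x by move=> *; apply: sin_gt0_pi; apply/andP.
have s1 := sin_pos _ a1p a1pi; have s2 := sin_pos _ a2p a2pi; have s3 := sin_pos _ a3p a3pi.
set X := cos a3 + cos (a1 + a2).
have X0 : 0 < X.
  have : cos (pi - a3) < cos (a1 + a2).
    by rewrite ltr_cos ?in_itv /=; try (apply/andP; split); lra.
  by rewrite cosB cospi sinpi mul0r addr0 mulN1r /X; lra.
rewrite /nondegenerate_traces sqrrN !cos_sqr_sub4; apply/and5P; split;
  try by rewrite mulf_neq0 ?oppr_eq0 ?pnatr_eq0 ?expf_neq0 ?gt_eqF.
- rewrite (_ : _ - _ = 4%:R * (sin a1 ^+ 2 + sin a2 ^+ 2)); last by rewrite !exprMn !cos2sin2; ring.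
  by rewrite gt_eqF // mulr_gt0 ?addr_gt0 ?exprn_gt0.
- rewrite (_ : _ - _ = - 16%:R * X * (X + 2 * (sin a1 * sin a2))); last by rewrite /X cosD; ring.
  by rewrite !mulf_neq0 ?oppr_eq0 ?pnatr_eq0 ?gt_eqF // addr_gt0 // !mulr_gt0.
Qed.

Lemma pants_nondegenerate (l1 l2 l3 : R) : 0 < l1 -> 0 < l2 -> 0 < l3 ->
  nondegenerate_traces (2 * coshR l1) (2 * coshR l2) (- (2 * coshR l3)).
Proof.
move=> /sinhR_gt0 s1 /sinhR_gt0 s2 /sinhR_gt0 s3.
have c1 := coshR_gt0 l1; have c2 := coshR_gt0 l2; have c3 := coshR_gt0 l3.
rewrite /nondegenerate_traces sqrrN !cosh_sqr_sub4; apply/and5P; split;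
  try by rewrite mulf_neq0 ?pnatr_eq0 ?expf_neq0 ?gt_eqF.
- rewrite (_ : _ - _ = - (((2 * coshR l1) ^+ 2 - 4%:R) + ((2 * coshR l2) ^+ 2 - 4%:R)));
    last by ring.
  by rewrite !cosh_sqr_sub4 oppr_eq0 gt_eqF //; apply: addr_gt0; rewrite mulr_gt0 ?exprn_gt0.
- rewrite (_ : _ - _ = - 16%:R * (coshR l3 ^+ 2 + 2 * (coshR l1 * coshR l2 * coshR l3)
      + (coshR l1 * coshR l2) ^+ 2 - (sinhR l1 * sinhR l2) ^+ 2)); last by ring.
  rewrite (exprMn 2 (coshR l1)) (exprMn 2 (sinhR l1)) !coshR_sqr mulf_neq0 ?oppr_eq0 ?pnatr_eq0 // gt_eqF //.
  have := mulr_gt0 (mulr_gt0 c1 c2) c3; have := exprn_gt0 2 s1; have := exprn_gt0 2 s2.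
  have := exprn_gt0 2 s3; lra.
Qed.

End RealTraces.

Lemma mxtrace_map (R S : pzRingType) (f : {rmorphism R -> S}) n (g : 'M[R]_n) :
  \tr (map_mx f g) = f (\tr g).
Proof. by rewrite /mxtrace rmorph_sum; apply: eq_bigr => i _; rewrite mxE. Qed.

Lemma nondegenerate_traces_map (K L : fieldType) (f : {rmorphism K -> L}) (t1 t2 t3 : K) :
  nondegenerate_traces (f t1) (f t2) (f t3) = nondegenerate_traces t1 t2 t3.
Proof.
by rewrite /nondegenerate_traces -!(fmorph_eq0 f) !(rmorphB, rmorphM, rmorphXn, rmorph_nat).
Qed.

Local Open Scope complex_scope.

Lemma disc_formE (R : realType) (x : 'cV[R[i]]_3) : disc x = disc_form x x.
Proof.
rewrite /disc /disc_form /disc_mx; col3_coords x => x0 x1 x2.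
by rewrite !mxE !inordK //=; mx_simpl; ring.
Qed.

Lemma holonomy_torsion_sqr (R : realType) (A B : 'M[R]_2) (I1 I2 I3 : 'cV[R[i]]_3) :
  \det A = 1 -> \det B = 1 -> nondegenerate_traces (\tr A) (\tr B) (\tr (A *m B)) ->
  normalized_invariant A I1 -> normalized_invariant B I2 ->
  normalized_invariant (invmx (A *m B)) I3 ->
  [/\ H0_vanishes A B, H1_basis A B I1 I2 I3 &
     forall L, bd A B *m L \in unitmx ->
       torsion (bd A B) (hP A B I1 I2 I3) L ^+ 2 =
       (4%:R * ((\tr A)%:C ^+ 2 - 4%:R) * ((\tr B)%:C ^+ 2 - 4%:R)
         * ((\tr (A *m B))%:C ^+ 2 - 4%:R))^-1].
Proof.
set f := real_complex R; set A' := map_mx f A; set B' := map_mx f B.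
move=> detA detB nondeg [_ fixI1 normI1] [_ fixI2 normI2] [_ fixI3 normI3].
have detA' : \det A' = 1 by rewrite det_map_mx detA rmorph1.
have detB' : \det B' = 1 by rewrite det_map_mx detB rmorph1.
have trAB' : \tr (A' *m B') = f (\tr (A *m B)) by rewrite -map_mxM mxtrace_map.
have nondeg' : nondegenerate_traces (\tr A') (\tr B') (\tr (A' *m B')).
  by rewrite trAB' !mxtrace_map nondegenerate_traces_map.
rewrite /AdC -/A' -/B' map_invmx map_mxM -/A' -/B' in fixI1 fixI2 fixI3.
rewrite !disc_formE in normI1 normI2 normI3.
have two_neq0 : 2 != 0 :> R[i] by rewrite pnatr_eq0.
have hPE : hP A B I1 I2 I3 = cycle_mx A' B' I1 I2 I3.
  by rewrite /hP /AdC !map_invmx map_mxM.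
have rankD : \rank (boundary_mx A' B') = 3 by apply: rank_boundary_mx.
have freeH := row_free_cycle_mx detA' detB' fixI1 fixI2 fixI3 normI1 normI2 normI3 nondeg'.
have [rankK basisH] := kermx_tr_basis rankD (boundary_cycle_mx detA' detB' fixI1 fixI2 fixI3) freeH.
split; first exact: rankD.
  by rewrite /H1_basis /H1 hPE; split; [exact: rankK | exact: basisH | exact: freeH].
move=> L; rewrite /torsion hPE unitmxE unitfE => /(torsion_cycle_mx_sqr detA' detB' fixI1 fixI2 fixI3
  normI1 normI2 normI3 two_neq0 nondeg') ->.
by rewrite trAB' !mxtrace_map.
Qed.

Lemma sqrf_eq_pm (F : idomainType) (x y : F) : x ^+ 2 = y ^+ 2 -> x = y \/ x = - y.
Proof. by move/eqP; rewrite eqf_sqr => /orP[/eqP|/eqP]; [left | right]. Qed.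

Lemma cone_torsion_value (R : realType) (a1 a2 a3 : R) :
  sin a1 != 0 -> sin a2 != 0 -> sin a3 != 0 ->
  (4%:R * ((2 * cos a1)%:C ^+ 2 - 4%:R) * ((2 * cos a2)%:C ^+ 2 - 4%:R)
     * ((- (2 * cos a3))%:C ^+ 2 - 4%:R))^-1 =
  ('i / (16%:R * ((sin a1)%:C * (sin a2)%:C * (sin a3)%:C))) ^+ 2.
Proof.
have E (a : R) : (2 * cos a)%:C ^+ 2 - 4%:R = - 4%:R * (sin a)%:C ^+ 2.
  by have := congr1 (real_complex R) (cos_sqr_sub4 a);
    rewrite !(rmorphB, rmorphM, rmorphN, rmorphXn, rmorph_nat).
move=> s1 s2 s3; rewrite rmorphN sqrrN !E expr_div_n sqr_i.
by field; rewrite !fmorph_eq0 s1 s2 s3.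
Qed.

Lemma pants_torsion_value (R : realType) (l1 l2 l3 : R) :
  sinhR l1 != 0 -> sinhR l2 != 0 -> sinhR l3 != 0 ->
  (4%:R * ((2 * coshR l1)%:C ^+ 2 - 4%:R) * ((2 * coshR l2)%:C ^+ 2 - 4%:R)
     * ((- (2 * coshR l3))%:C ^+ 2 - 4%:R))^-1 =
  (1 / (16%:R * ((sinhR l1)%:C * (sinhR l2)%:C * (sinhR l3)%:C))) ^+ 2.
Proof.
have E (l : R) : (2 * coshR l)%:C ^+ 2 - 4%:R = 4%:R * (sinhR l)%:C ^+ 2.
  by have := congr1 (real_complex R) (cosh_sqr_sub4 l);
    rewrite !(rmorphB, rmorphM, rmorphXn, rmorph_nat).
move=> s1 s2 s3; rewrite rmorphN sqrrN !E expr_div_n expr1n.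
by field; rewrite !fmorph_eq0 s1 s2 s3.
Qed.

Theorem proposition3p1 (R : realType) :
  (* case P_alpha: hyperbolic sphere with cone angles 2 a_k < 2 pi *)
  (forall (a1 a2 a3 : R) (A B : 'M[R]_2) (I1 I2 I3 : 'cV[R[i]]_3),
     0 < a1 -> 0 < a2 -> 0 < a3 -> a1 < pi -> a2 < pi -> a3 < pi ->
     a1 + a2 + a3 < pi ->
     cone_holonomy a1 a2 a3 A B ->
     normalized_invariant A I1 -> normalized_invariant B I2 ->
     normalized_invariant (invmx (A *m B)) I3 ->
     [/\ H0_vanishes A B,
         H1_basis A B I1 I2 I3 &
         forall L : 'M[R[i]]_(3 + 3, 3), (bd A B *m L) \in unitmx ->
           let t := torsion (bd A B) (hP A B I1 I2 I3) L in
           let v := 'i / (16%:R * ((sin a1)%:C * (sin a2)%:C * (sin a3)%:C)) in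
           t = v \/ t = - v])
  /\
  (* case P_l: hyperbolic pair of pants with geodesic boundary lengths 2 l_k *)
  (forall (l1 l2 l3 : R) (A B : 'M[R]_2) (I1 I2 I3 : 'cV[R[i]]_3),
     0 < l1 -> 0 < l2 -> 0 < l3 ->
     pants_holonomy l1 l2 l3 A B ->
     normalized_invariant A I1 -> normalized_invariant B I2 ->
     normalized_invariant (invmx (A *m B)) I3 ->
     [/\ H0_vanishes A B,
         H1_basis A B I1 I2 I3 &
         forall L : 'M[R[i]]_(3 + 3, 3), (bd A B *m L) \in unitmx ->
           let t := torsion (bd A B) (hP A B I1 I2 I3) L in
           let v := 1 / (16%:R * ((sinhR l1)%:C * (sinhR l2)%:C * (sinhR l3)%:C)) in
           t = v \/ t = - v]).
Proof.
split=> [a1 a2 a3 | l1 l2 l3] A B I1 I2 I3.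
- move=> a1p a2p a3p a1pi a2pi a3pi sum_lt [detA detB trA trB trAB] nI1 nI2 nI3.
  have nondeg : nondegenerate_traces (\tr A) (\tr B) (\tr (A *m B)).
    by rewrite trA trB trAB; exact: cone_nondegenerate.
  have [H0 H1 tors] := holonomy_torsion_sqr detA detB nondeg nI1 nI2 nI3.
  split=> // L unitDL t v; apply: sqrf_eq_pm.
  have sin_neq0 (a : R) : 0 < a -> a < pi -> sin a != 0.
    by move=> *; rewrite gt_eqF // sin_gt0_pi //; apply/andP.
  by rewrite /t tors // trA trB trAB cone_torsion_value ?sin_neq0.
- move=> l1p l2p l3p [detA detB trA trB trAB] nI1 nI2 nI3.
  have nondeg : nondegenerate_traces (\tr A) (\tr B) (\tr (A *m B)).
    by rewrite trA trB trAB; exact: pants_nondegenerate.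
  have [H0 H1 tors] := holonomy_torsion_sqr detA detB nondeg nI1 nI2 nI3.
  split=> // L unitDL t v; apply: sqrf_eq_pm.
  by rewrite /t tors // trA trB trAB pants_torsion_value ?gt_eqF ?sinhR_gt0.
Qed.
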